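(* Let $(\mathbb L,d)$ be a finite metric space and $m,m_V,\tilde m>0$. Then \[ \sup_{x\in\mathbb L}\sum_{\substack{X\subset\mathbb L\\ F\subset T\in\mathfrak T(X)}}12^{-|X|}c_{\sf g}(m_V)^{-|F|}c_{\sf g}(m)^{-|T\setminus F|}e^{-m_Vd(F)-md(T\setminus F)}e^{-\tilde m d(x;X)}\le c_{\sf g}(\tilde m) \] and \[ \sup_{x\in\mathbb L}\sum_{\substack{X\subset\mathbb L\\ F\subset T\in\mathfrak T(X)}}32^{-|X|}c_{\sf g}(m_V)^{-|F|}c_{\sf g}(m)^{-|T\setminus F|}e^{-m_Vd(F)-md(T\setminus F)}e^{-\tilde m d(x;X)}\prod_{y\in X}d^T(y)!\le c_{\sf g}(\tilde m). \]
   Context: The sums run over nonempty subsets $X\subset\mathbb L$, trees $T\in\mathfrak T(X)$ with vertex set $X$ (for $|X|=1$ the only tree is the edgeless one), and edge subsets $F\subset T$. For a set of edges $F$, $|F|$ is its number of edges and $d(F)=\sum_{\{y,y'\}\in F}d(y,y')$. $d(x;X)=\min_{x'\in X}d(x,x')$. $d^T(y)$ is the degree of $y$ in $T$. The geometric constant is $c_{\sf g}(m)=\sup_{x\in\mathbb L}\sum_{x'\in\mathbb L}e^{-md(x,x')}$. *)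

From HB Require Import structures.
From mathcomp Require Import all_boot all_order all_algebra.
From mathcomp Require Import all_classical all_reals all_analysis.
Set Implicit Arguments. Unset Strict Implicit. Unset Printing Implicit Defensive.
Import Order.TTheory GRing.Theory Num.Theory.
Local Open Scope ring_scope.

Section Defs.
Context {R : realType} {L : finType}.

Definition is_metric (d : L -> L -> R) : Prop :=
  [/\ forall x y, 0 <= d x y,
      forall x y, d x y = 0 <-> x = y,
      forall x y, d x y = d y x &
      forall x y z, d x z <= d x y + d y z].

(* an (undirected) edge is a 2-element subset {y, y'} of L;
   a graph is given by a set of edges *)
Definition adj (E : {set {set L}}) : rel L := fun a b => [set a; b] \in E.

Definition is_tree (X : {set L}) (E : {set {set L}}) : Prop :=
  [/\ forall e, e \in E -> e \subset X /\ #|e| = 2%N,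
      forall x y, x \in X -> y \in X -> connect (adj E) x y &
      (* acyclic: every edge {a,b} is a bridge (no other path from a to b) *)
      forall e a b, e \in E -> e = [set a; b] -> ~~ connect (adj (E :\ e)) a b].

(* length of the edge {y,y'} : d(y,y') (written symmetrically) *)
Definition edge_len (d : L -> L -> R) (e : {set L}) : R :=
  (\sum_(y in e) \sum_(y' in e) d y y') / 2.

Definition dset (d : L -> L -> R) (F : {set {set L}}) : R :=
  \sum_(e in F) edge_len d e.

Definition dist_to (d : L -> L -> R) (x : L) (X : {set L}) : R :=
  match [pick x' in X] with
  | Some x0 => \big[Num.min/d x x0]_(x' in X) d x x'
  | None => 0
  end.

Definition deg (E : {set {set L}}) (y : L) : nat := #|[set e in E | y \in e]|.

Definition cg (d : L -> L -> R) (m : R) : R :=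
  \big[Num.max/0]_(x : L) \sum_(x' : L) expR (- (m * d x x')).

End Defs.

From HB Require Import structures.
From mathcomp Require Import all_boot all_order all_algebra.
From mathcomp Require Import boolp reals sequences exp.
From mathcomp Require Import zify ring lra.
Set Implicit Arguments. Unset Strict Implicit. Unset Printing Implicit Defensive.
Import Order.TTheory GRing.Theory Num.Theory.

(* Summing over F \subset T factorises the weight of (X, T) into a product over the
   edges e of T of w(e) = c_g(m_V)^-1 e^(-m_V d(e)) + c_g(m)^-1 e^(-m d(e)), and
   sum_z w({r, z}) <= 2 for every r.  Bounding e^(-m' d(x;X)) by the sum of the
   e^(-m' d(x,r)) over r in X reduces both claims to Phi(r) <= 1, where Phi(r) sums
   a^|X| prod_e w(e) prod_y k_y! q^(k_y) over the trees containing r, k_y being the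
   number of children of y when the tree is rooted at r; the factor prod_y d^T(y)!
   is at most prod_y k_y! 2^(k_y).  Deleting a root edge {r, z} splits a tree rooted
   at r into one rooted at r and one rooted at z, whence Phi <= a + 2q Phi^2, so
   Phi <= c as soon as a + 2q c^2 <= c: take (a, q, c) = (1/12, 1, 1/4), resp.
   (1/32, 2, 1/8). *)

Lemma big_setU_disjoint (R : Type) (idx : R) (op : Monoid.com_law idx)
    (I : finType) (A B : {set I}) (F : I -> R) :
  [disjoint A & B] ->
  \big[op/idx]_(i in A :|: B) F i = op (\big[op/idx]_(i in A) F i) (\big[op/idx]_(i in B) F i).
Proof. by move=> dAB; rewrite -bigU //; apply: eq_bigl => i; rewrite inE. Qed.

Lemma connect_ind (T : finType) (e : rel T) (P : pred T) a b :
  P a -> (forall y w, P y -> e y w -> P w) -> connect e a b -> P b.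
Proof.
move=> Pa Pe /connectP [p e_p ->]; elim: p a Pa e_p => //= w p IHp a Pa.
by case/andP=> e_aw e_p; apply: IHp (Pe _ _ Pa e_aw) e_p.
Qed.

Lemma leq_fact_exp2 (n : nat) (b : bool) : n`! <= (n - b)`! * 2 ^ (n - b).
Proof.
case: b; last by rewrite subn0 leq_pmulr // expn_gt0.
case: n => [|n] //=; rewrite subSS subn0 factS mulnC leq_mul2l.
by rewrite ltn_expl ?orbT.
Qed.

Section Trees.
Variable L : finType.
Implicit Types (X : {set L}) (E T : {set {set L}}).

Lemma adj_sym E : symmetric (adj E).
Proof. by move=> a b; rewrite /adj setUC. Qed.

Lemma connect_adjC E a b : connect (adj E) a b = connect (adj E) b a.
Proof. exact: (sym_connect_sym (adj_sym E)). Qed.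

Lemma connect_adjS E E' a b :
  E \subset E' -> connect (adj E) a b -> connect (adj E') a b.
Proof.
move=> sEE'; apply: connect_sub => u v Euv; apply: connect1.
by rewrite /adj (subsetP sEE').
Qed.

Lemma tree_edgeP X T f : is_tree X T -> f \in T ->
  exists a b, [/\ a \in X, b \in X, a != b & f = [set a; b]].
Proof.
case=> edgesT _ _ fT; have [fX /eqP/cards2P [a [b [ab fab]]]] := edgesT f fT.
by exists a, b; rewrite !(subsetP fX) // fab !inE eqxx ?orbT.
Qed.

Lemma tree_edge_neq X T a b : is_tree X T -> [set a; b] \in T -> a != b.
Proof.
by case=> edgesT _ _ /edgesT[_]; rewrite cards2; case: (a != b).
Qed.

Lemma tree_edge_mem X T a b : is_tree X T -> [set a; b] \in T -> (a \in X) && (b \in X).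
Proof.
by case=> edgesT _ _ /edgesT[abX _]; rewrite !(subsetP abX) // !inE eqxx ?orbT.
Qed.

Definition component E X u := [set y in X | connect (adj E) u y].
Definition component_edges E X u := [set f in E | f \subset component E X u].

Lemma connect_component_edges E X u w :
  (forall f, f \in E -> f \subset X) ->
  connect (adj E) u w -> connect (adj (component_edges E X u)) u w.
Proof.
move=> EX uw; suff /andP[] : connect (adj E) u w && connect (adj (component_edges E X u)) u w by [].
apply: (connect_ind (P := fun w => connect (adj E) u w && _)) uw; first by rewrite !connect0.
move=> y v /andP[uy uy'] yv; have uv := connect_trans uy (connect1 yv).
have yvE : [set y; v] \in E := yv.
rewrite uv (connect_trans uy' (connect1 _)) // /adj inE yvE.
apply/subsetP => t; rewrite !inE => /orP[]/eqP->; rewrite ?uy ?uv andbT;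
  by rewrite (subsetP (EX _ yvE)) // !inE eqxx ?orbT.
Qed.

Lemma is_tree_component X T E u : is_tree X T -> E \subset T ->
  is_tree (component E X u) (component_edges E X u).
Proof.
move=> [edgesT _ bridgeT] sET; split.
- by move=> f; rewrite inE => /andP[/(subsetP sET)/edgesT[_ ->] ->].
- have EX f : f \in E -> f \subset X by move/(subsetP sET)/edgesT=> [].
  move=> y y'; rewrite !inE => /andP[_ uy] /andP[_ uy'].
  rewrite (connect_trans _ (connect_component_edges EX uy')) //.
  by rewrite connect_adjC connect_component_edges.
- move=> f a b; rewrite inE => /andP[fE _] fab; apply: contra (bridgeT f a b (subsetP sET _ fE) fab).
  apply: connect_adjS; apply: setSD; apply: subset_trans sET.
  by apply/subsetP => g; rewrite inE => /andP[].
Qed.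

Lemma deg_sum E y : deg E y = \sum_(f in E) (y \in f : nat).
Proof.
rewrite /deg -sum1_card (eq_bigl (fun f => (f \in E) && (y \in f))) => [|f]; last by rewrite inE.
by rewrite big_mkcondr; apply: eq_bigr => f _; case: (y \in f).
Qed.

Lemma deg_tree X T r : is_tree X T -> deg T r = #|[set z | [set r; z] \in T]|.
Proof.
move=> treeT; rewrite /deg.
have -> : [set f in T | r \in f] = (fun z => [set r; z]) @: [set z | [set r; z] \in T].
  apply/setP => f; rewrite inE; apply/andP/imsetP => [[fT rf]|[z]]; last first.
    by rewrite inE => rzT ->; rewrite rzT !inE eqxx.
  have [a [b [_ _ _ fab]]] := tree_edgeP treeT fT; subst f.
  move: rf fT; rewrite !inE => /orP[]/eqP<- abT; first by exists b; rewrite ?inE.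
  by exists a; rewrite ?inE setUC.
apply: card_in_imset => z1 z2; rewrite !inE => rz1T _ rz12.
have : z1 \in [set r; z2] by rewrite -rz12 !inE eqxx orbT.
by rewrite !inE eq_sym (negbTE (tree_edge_neq treeT rz1T)) => /eqP.
Qed.

Lemma tree_neighbour X T r : is_tree X T -> r \in X -> X != [set r] ->
  exists z, [set r; z] \in T.
Proof.
move=> [_ connT _] rX; rewrite eqEsubset sub1set rX andbT => /subsetPn[y yX].
rewrite inE => yr; apply/existsP; apply: contraNT yr => /existsPn noE.
apply: (connect_ind (P := pred1 r)) (connT _ _ rX yX); first exact: eqxx.
move=> a b /eqP-> rb.
by have := noE b; rewrite -[_ \in _]/(adj T r b) rb.
Qed.

Lemma tree_set1 X T r : is_tree X T -> X = [set r] -> T = set0.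
Proof.
move=> treeT Xr; apply/setP => f; rewrite inE; apply/negbTE/negP => fT.
have [a [b [aX bX ab _]]] := tree_edgeP treeT fT.
by move: aX bX ab; rewrite Xr !inE => /eqP-> /eqP->; rewrite eqxx.
Qed.

Lemma is_tree_set1 (r : L) : is_tree [set r] set0.
Proof.
split=> [e|x y|e a b]; rewrite ?inE //.
by move=> /eqP-> /eqP->; rewrite connect0.
Qed.

Definition branch X T r z := component (T :\ [set r; z]) X r.
Definition branch_edges X T r z := component_edges (T :\ [set r; z]) X r.

Section Branches.
Variables (X : {set L}) (T : {set {set L}}).
Hypothesis treeT : is_tree X T.

Lemma is_tree_branch r z : is_tree (branch X T r z) (branch_edges X T r z).
Proof. exact: is_tree_component treeT (subsetDl _ _). Qed.

Lemma mem_branch r z : [set r; z] \in T -> r \in branch X T r z.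
Proof. by move=> rzT; rewrite inE connect0 andbT; case/andP: (tree_edge_mem treeT rzT). Qed.

Lemma disjoint_branch r z : [set r; z] \in T -> [disjoint branch X T r z & branch X T z r].
Proof.
case: treeT => _ _ bridgeT rzT; apply/pred0P => y /=; rewrite !inE [[set z; r]]setUC.
apply/negbTE/negP => /andP[/andP[_ ry] /andP[_ zy]].
by case/negP: (bridgeT _ r z rzT erefl); rewrite (connect_trans ry) // connect_adjC.
Qed.

Lemma branch_cover r z : [set r; z] \in T -> X = branch X T r z :|: branch X T z r.
Proof.
case: (treeT) => _ connT _ rzT; have /andP[rX _] := tree_edge_mem treeT rzT.
apply/setP => y; rewrite !inE [[set z; r]]setUC; case yX: (y \in X) => //=; symmetry.
apply: (connect_ind (P := fun w => connect _ r w || connect _ z w)) (connT _ _ rX yX).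
  by rewrite connect0.
move=> a b rza ab; case: (eqVneq [set a; b] [set r; z]) => [abrz | abrz].
  have : b \in [set r; z] by rewrite -abrz !inE eqxx orbT.
  by rewrite !inE => /orP[]/eqP->; rewrite connect0 ?orbT.
have ab' : adj (T :\ [set r; z]) a b by rewrite /adj !inE abrz.
by case/orP: rza => xa; rewrite (connect_trans xa (connect1 ab')) ?orbT.
Qed.

Lemma card_branch r z : [set r; z] \in T ->
  #|X| = (#|branch X T r z| + #|branch X T z r|)%N.
Proof.
move=> rzT; rewrite {1}(branch_cover rzT); apply/eqP.
by rewrite (leq_card_setU _ _).2 disjoint_branch.
Qed.

Lemma branch_edges_cover r z : [set r; z] \in T ->
  T = [set r; z] |: (branch_edges X T r z :|: branch_edges X T z r).
Proof.
move=> rzT; apply/setP => f; rewrite !inE [[set z; r]]setUC.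
case: (eqVneq f [set r; z]) => [-> //| frz] /=.
apply/idP/idP => [fT | /orP[] /andP[]//]; rewrite fT /=.
have [a [b [aX bX _ fab]]] := tree_edgeP treeT fT.
have ab : adj (T :\ [set r; z]) a b by rewrite /adj !inE -fab frz.
have : a \in branch X T r z :|: branch X T z r by rewrite -branch_cover.
rewrite /branch [[set z; r]]setUC !inE aX /= => /orP[] xa; apply/orP; [left | right];
  by apply/subsetP => y; rewrite fab !inE;
     case/orP=> /eqP->; rewrite ?aX ?bX ?xa ?(connect_trans xa (connect1 ab)).
Qed.

Lemma disjoint_branch_edges r z : [set r; z] \in T ->
  [disjoint branch_edges X T r z & branch_edges X T z r].
Proof.
move=> rzT; apply/pred0P => f /=; apply/negbTE/negP.
rewrite !inE => /andP[/andP[/andP[_ fT] fB] /andP[_ fB']].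
have [a [b [_ _ _ fab]]] := tree_edgeP treeT fT.
have af : a \in f by rewrite fab !inE eqxx.
by move/pred0P: (disjoint_branch rzT) => /(_ a) /=; rewrite (subsetP fB) ?(subsetP fB').
Qed.

Lemma deg_branch r z y : [set r; z] \in T -> y \in branch X T r z ->
  deg T y = (deg (branch_edges X T r z) y + (y == r))%N.
Proof.
move=> rzT yB; have zrT : [set z; r] \in T by rewrite setUC.
have yB' : y \notin branch X T z r by rewrite (disjointFr (disjoint_branch rzT)).
rewrite {1}(branch_edges_cover rzT) !deg_sum big_setU1 /=; last first.
  by rewrite !inE negb_or [[set z; r]]setUC eqxx.
rewrite big_setU_disjoint ?disjoint_branch_edges // [X in (_ + (_ + X))%N]big1.
  rewrite addn0 addnC !inE; case: (eqVneq y z) => [yz|]; last by rewrite orbF.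
  by rewrite yz (mem_branch zrT) in yB'.
by move=> f; rewrite inE => /andP[_ fB']; rewrite (contraNF (subsetP fB' y) yB').
Qed.

End Branches.
End Trees.

Local Open Scope ring_scope.

Lemma ler_sum_inj (R : numDomainType) (I J : finType) (P : pred I) (Q : pred J)
    (h : I -> J) (F : J -> R) :
  {in P &, injective h} -> {in P, forall i, Q (h i)} -> {in Q, forall j, 0 <= F j} ->
  \sum_(i | P i) F (h i) <= \sum_(j | Q j) F j.
Proof.
move=> h_inj PQ F0; rewrite -(big_imset F h_inj) /=.
rewrite (eq_bigl (fun j => Q j && (j \in h @: P))) => [|j]; last first.
  by case: imsetP => [[i Pi ->]|]; rewrite ?andbF ?PQ.
rewrite [leRHS](bigID (mem (h @: P))) /= lerDl.
by apply: sumr_ge0 => j /andP[/F0].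
Qed.

Section RootedTrees.
Variables (R : realFieldType) (L : finType) (W : {set L} -> R) (a : R) (q : nat).
Hypotheses (a_ge0 : 0 <= a) (W_ge0 : forall f, 0 <= W f).
Implicit Types (X : {set L}) (T : {set {set L}}) (r z : L).

Definition branching_weight (k : nat) : nat := (k`! * q ^ k)%N.

(* In [T] rooted at [r], the vertex [y] has [deg T y - (y != r)] children. *)
Definition rooted_factor T r X : nat :=
  \prod_(y in X) branching_weight (deg T y - (y != r)).

Definition rooted_weight r X T : R :=
  a ^+ #|X| * \prod_(f in T) W f * (rooted_factor T r X)%:R.

Lemma branching_weightS k : branching_weight k.+1 = (k.+1 * (q * branching_weight k))%N.
Proof. by rewrite /branching_weight factS expnS; ring. Qed.

Lemma rooted_factor_split X T r z : is_tree X T -> [set r; z] \in T ->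
  rooted_factor T r X = (deg T r * q * rooted_factor (branch_edges X T r z) r (branch X T r z)
                         * rooted_factor (branch_edges X T z r) z (branch X T z r))%N.
Proof.
move=> treeT rzT; have zrT : [set z; r] \in T by rewrite setUC.
have rB := mem_branch treeT rzT.
rewrite /rooted_factor {1}(branch_cover treeT rzT) big_setU_disjoint ?disjoint_branch //=.
congr (_ * _)%N.
  rewrite (bigD1 r rB) [in RHS](bigD1 r rB) /= (deg_branch treeT rzT rB) eqxx !subn0 addn1.
  rewrite (eq_bigr (fun y => branching_weight (deg (branch_edges X T r z) y - (y != r)))).
    by rewrite branching_weightS; ring.
  by move=> y /andP[yB yr]; rewrite (deg_branch treeT rzT yB) (negbTE yr) addn0.
apply: eq_bigr => y yB'; rewrite (deg_branch treeT zrT yB').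
have -> : y != r by apply: contraTneq yB' => ->; rewrite (disjointFr (disjoint_branch treeT rzT)).
by case: (eqVneq y z) => [->|]; rewrite ?addn1 ?subn1 ?addn0 ?subn0.
Qed.

Lemma rooted_weight_ge0 r X T : 0 <= rooted_weight r X T.
Proof. by rewrite /rooted_weight !mulr_ge0 ?exprn_ge0 // prodr_ge0. Qed.

Lemma rooted_weight_set1 r : rooted_weight r [set r] set0 = a.
Proof.
rewrite /rooted_weight cards1 expr1 big_set0 mulr1 /rooted_factor big_set1 eqxx subn0.
suff -> : deg set0 r = 0%N by rewrite /branching_weight mulr1.
by apply/eqP; rewrite cards_eq0; apply/eqP/setP => f; rewrite !inE.
Qed.

Lemma rooted_weight_split X T r z : is_tree X T -> [set r; z] \in T ->
  rooted_weight r X T = (deg T r)%:R * (q%:R * W [set r; z] *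
    (rooted_weight r (branch X T r z) (branch_edges X T r z) *
     rooted_weight z (branch X T z r) (branch_edges X T z r))).
Proof.
move=> treeT rzT; have prodT : \prod_(f in T) W f = W [set r; z] *
    (\prod_(f in branch_edges X T r z) W f * \prod_(f in branch_edges X T z r) W f).
  rewrite {1}(branch_edges_cover treeT rzT) big_setU1 /=.
    by rewrite big_setU_disjoint ?disjoint_branch_edges.
  by rewrite !inE negb_or [[set z; r]]setUC eqxx.
rewrite /rooted_weight (card_branch treeT rzT) (rooted_factor_split treeT rzT).
rewrite prodT exprD !natrM.
(* Abstract the atoms, which [ring] would otherwise try to unfold. *)
move: (a ^+ _) (a ^+ _) (W _) (\prod_(f in _) _) (\prod_(f in _) _) (_%:R) (_%:R) (_%:R) (_%:R).
by move=> *; ring.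
Qed.

(* Splitting at any of the [deg T r] root edges gives the same weight, so the
   factor [deg T r] can be traded for a sum over the neighbours of the root. *)
Lemma rooted_weight_neighbours X T r : is_tree X T -> r \in X -> X != [set r] ->
  rooted_weight r X T = \sum_(z in [set z | [set r; z] \in T])
    q%:R * W [set r; z] * (rooted_weight r (branch X T r z) (branch_edges X T r z) *
                           rooted_weight z (branch X T z r) (branch_edges X T z r)).
Proof.
move=> treeT rX Xr; have [z0 rz0T] := tree_neighbour treeT rX Xr.
have deg_neq0 : (deg T r)%:R != 0 :> R.
  by rewrite pnatr_eq0 (deg_tree r treeT) -lt0n; apply/card_gt0P; exists z0; rewrite inE.
rewrite (eq_bigr (fun=> rooted_weight r X T / (deg T r)%:R)) => [|z]; last first.
  by rewrite inE => rzT; rewrite (rooted_weight_split treeT rzT) [RHS]mulrC mulKf.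
by rewrite sumr_const -(deg_tree r treeT) -[_ *+ deg T r]mulr_natr divfK.
Qed.

Local Notation graph := ({set L} * {set {set L}})%type.

(* The size bound [N] makes the recursion below well founded. *)
Definition bounded_rooted_tree N r (G : graph) : bool :=
  [&& r \in G.1, (#|G.1| <= N)%N & `[< is_tree G.1 G.2 >]].

Definition rooted_sum N r : R :=
  \sum_(G | bounded_rooted_tree N r G) rooted_weight r G.1 G.2.

Lemma rooted_sum_ge0 N r : 0 <= rooted_sum N r.
Proof. by apply: sumr_ge0 => G _; apply: rooted_weight_ge0. Qed.

Lemma branch_pairs_le N r z :
  \sum_(G | bounded_rooted_tree N.+1 r G && ([set r; z] \in G.2))
     rooted_weight r (branch G.1 G.2 r z) (branch_edges G.1 G.2 r z) *
     rooted_weight z (branch G.1 G.2 z r) (branch_edges G.1 G.2 z r)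
  <= rooted_sum N r * rooted_sum N z.
Proof.
rewrite /rooted_sum big_distrlr pair_big_dep /=.
pose split_at (G : graph) :=
  ((branch G.1 G.2 r z, branch_edges G.1 G.2 r z), (branch G.1 G.2 z r, branch_edges G.1 G.2 z r)).
apply: (ler_sum_inj (h := split_at)) => [[X T] [X' T'] | [X T] | ? _].
- rewrite /bounded_rooted_tree /= => /andP[/and3P[_ _ /asboolP treeT] rzT].
  move=> /andP[/and3P[_ _ /asboolP treeT'] rzT'] [eB eE eB' eE'].
  rewrite /= in treeT rzT treeT' rzT'; congr pair.
    by rewrite (branch_cover treeT rzT) (branch_cover treeT' rzT') eB eB'.
  by rewrite (branch_edges_cover treeT rzT) (branch_edges_cover treeT' rzT') eE eE'.
- rewrite /bounded_rooted_tree /= => /andP[/and3P[_ XN /asboolP treeT] rzT].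
  rewrite /= in XN.
  have zrT : [set z; r] \in T by rewrite setUC.
  have rB := mem_branch treeT rzT; have zB := mem_branch treeT zrT.
  have B1 : (0 < #|branch X T r z|)%N by apply/card_gt0P; exists r.
  have B2 : (0 < #|branch X T z r|)%N by apply/card_gt0P; exists z.
  have := card_branch treeT rzT; rewrite rB zB !(asboolT (is_tree_branch treeT _ _)) /= => cardX.
  by rewrite !andbT; apply/andP; split; lia.
- exact: mulr_ge0 (rooted_weight_ge0 _ _ _) (rooted_weight_ge0 _ _ _).
Qed.

Lemma rooted_factor_gt0 T r X : (0 < q)%N -> (0 < rooted_factor T r X)%N.
Proof.
by move=> q_gt0; apply: prodn_gt0 => y; rewrite muln_gt0 fact_gt0 expn_gt0 q_gt0.
Qed.

Lemma rooted_sum_rec N r :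
  rooted_sum N.+1 r <= a + \sum_z q%:R * W [set r; z] * (rooted_sum N r * rooted_sum N z).
Proof.
have single : bounded_rooted_tree N.+1 r ([set r], set0).
  by rewrite /bounded_rooted_tree /= inE eqxx cards1 asboolT //; apply: is_tree_set1.
rewrite /rooted_sum (bigD1 _ single) /= rooted_weight_set1 lerD2l.
rewrite (eq_bigr (fun G : graph => \sum_(z in [set z | [set r; z] \in G.2])
    q%:R * W [set r; z] * (rooted_weight r (branch G.1 G.2 r z) (branch_edges G.1 G.2 r z) *
                           rooted_weight z (branch G.1 G.2 z r) (branch_edges G.1 G.2 z r))));
  last first.
  move=> [X T] /andP[/and3P[/= rX _ /asboolP treeT] G1]; apply: rooted_weight_neighbours => //.
  by apply: contraNneq G1 => Xr; rewrite Xr (tree_set1 treeT Xr).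
rewrite (exchange_big_dep predT) //=; apply: ler_sum => z _; rewrite -mulr_sumr.
apply: ler_wpM2l; first by rewrite mulr_ge0.
apply: le_trans (branch_pairs_le N r z); rewrite le_eqVlt; apply/orP; left.
apply/eqP/eq_bigl => -[X T] /=; rewrite inE andbC; case rzT: ([set r; z] \in T); rewrite ?andbF //.
case: (eqVneq (X, T) ([set r], set0)) => [[_ T0] | _]; last by rewrite !andbT.
by rewrite T0 inE in rzT.
Qed.

Lemma rooted_sum_le (B c : R) :
  (forall r, \sum_z q%:R * W [set r; z] <= B) -> a + B * c ^+ 2 <= c ->
  forall N r, rooted_sum N r <= c.
Proof.
move=> WB c_fix; elim=> [|N IHN] r.
  have B_ge0 : 0 <= B by apply: le_trans _ (WB r); apply: sumr_ge0 => z _; rewrite mulr_ge0 ?ler0n ?W_ge0.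
  have c_ge0 : 0 <= c by apply: le_trans _ c_fix; rewrite addr_ge0 // mulr_ge0 // sqr_ge0.
  rewrite /rooted_sum big1 // => -[X T]; rewrite /bounded_rooted_tree /= leqn0 cards_eq0.
  by case: (eqVneq X set0) => [->|]; rewrite ?inE ?andbF.
apply: le_trans (rooted_sum_rec N r) _; apply: le_trans _ c_fix; rewrite lerD2l.
apply: le_trans (_ : \sum_z q%:R * W [set r; z] * c ^+ 2 <= _); last first.
  by rewrite -mulr_suml ler_wpM2r ?sqr_ge0.
apply: ler_sum => z _; rewrite ler_wpM2l ?mulr_ge0 // expr2.
by rewrite ler_pM ?rooted_sum_ge0.
Qed.

End RootedTrees.

Lemma prodD_sum_subsets (R : comNzRingType) (I : finType) (A : {set I}) (u v : I -> R) :
  \prod_(i in A) (u i + v i) =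
  \sum_(F : {set I} | F \subset A) \prod_(i in F) u i * \prod_(i in A :\: F) v i.
Proof.
have -> : \prod_(i in A) (u i + v i) =
    \prod_i ((if i \in A then u i else 0) + (if i \in A then v i else 1)).
  by rewrite big_mkcond; apply: eq_bigr => i _; case: (i \in A); rewrite ?add0r.
rewrite bigA_distr (bigID (fun F : {set I} => F \subset A)) /= [X in _ + X]big1 ?addr0.
  apply: eq_bigr => F sFA; rewrite (big_mkcond (mem F)) (big_mkcond (mem (A :\: F))) -big_split.
  apply: eq_bigr => i _; rewrite !inE; case: (boolP (i \in F)) => iF /=.
    by rewrite (subsetP sFA i iF) mulr1.
  by case: (i \in A); rewrite mul1r.
move=> F /subsetPn[i iF iA].
by rewrite (bigD1 i) //= iF (negbTE iA) mul0r.
Qed.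

Section ClusterSums.
Variables (R : realType) (L : finType) (d : L -> L -> R).
Hypothesis d_metric : is_metric d.
Implicit Types (X : {set L}) (T : {set {set L}}) (x y r z : L) (k m mV mt : R).

Lemma edge_len_set2 r z : edge_len d [set r; z] = d r z.
Proof.
case: d_metric => _ d0 d_sym _; have d_refl y : d y y = 0 by apply/d0.
case: (eqVneq r z) => [<-|rz]; first by rewrite setUid /edge_len !big_set1 d_refl mul0r.
have sum2 (f : L -> R) : \sum_(y in [set r; z]) f y = f r + f z.
  by rewrite big_setU1 ?inE //= big_set1.
by rewrite /edge_len !sum2 !d_refl (d_sym z r); field.
Qed.

Lemma sum_expR_le_cg m y : \sum_z expR (- (m * d y z)) <= cg d m.
Proof. exact: (le_bigmax 0 (fun y => \sum_z expR (- (m * d y z))) y). Qed.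

Lemma cg_ge1 m (y : L) : 1 <= cg d m.
Proof.
apply: le_trans (sum_expR_le_cg m y); case: d_metric => _ d0 _ _.
rewrite (bigD1 y) //= (proj2 (d0 y y) erefl) mulr0 oppr0 expR0 lerDl.
by apply: sumr_ge0 => z _; apply: expR_ge0.
Qed.

Lemma cg_ge0 m : 0 <= cg d m.
Proof.
apply: (big_ind (fun v => 0 <= v)) => // [u v u0 v0|y _]; first by rewrite le_max u0.
by apply: sumr_ge0 => z _; apply: expR_ge0.
Qed.

Lemma dist_to_attained x X : X != set0 -> exists2 r, r \in X & dist_to d x X = d x r.
Proof.
rewrite /dist_to; case: pickP => [x0 x0X _ | X0]; last first.
  by case/negP; apply/eqP/setP => y; rewrite inE X0.
apply: (big_ind (fun v => exists2 r, r \in X & v = d x r)) => [|u v [r1 r1X ->] [r2 r2X ->]|];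
  [by exists x0 | | by move=> y yX; exists y].
by rewrite minEle; case: ifP => _; [exists r1 | exists r2].
Qed.

Lemma expR_dist_to_le mt x X : X != set0 ->
  expR (- (mt * dist_to d x X)) <= \sum_(r in X) expR (- (mt * d x r)).
Proof.
case/(dist_to_attained x) => r rX ->; rewrite (bigD1 r) //= lerDl.
by apply: sumr_ge0 => z _; apply: expR_ge0.
Qed.

Definition edge_weight m mV (e : {set L}) : R :=
  (cg d mV)^-1 * expR (- (mV * edge_len d e)) + (cg d m)^-1 * expR (- (m * edge_len d e)).

Lemma edge_weight_ge0 m mV e : 0 <= edge_weight m mV e.
Proof. by rewrite addr_ge0 // mulr_ge0 ?expR_ge0 // invr_ge0 cg_ge0. Qed.

Lemma sum_edge_weight_le m mV r : \sum_z edge_weight m mV [set r; z] <= 2.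
Proof.
have le1 k : (cg d k)^-1 * \sum_z expR (- (k * d r z)) <= 1.
  have cg_neq0 : cg d k != 0 by rewrite gt_eqF // (lt_le_trans ltr01 (cg_ge1 k r)).
  by rewrite -(mulVf cg_neq0) ler_wpM2l ?sum_expR_le_cg // invr_ge0 cg_ge0.
rewrite /edge_weight big_split /=; under eq_bigr do rewrite edge_len_set2.
under [X in _ + X]eq_bigr do rewrite edge_len_set2.
by rewrite -!mulr_sumr; have := le1 mV; have := le1 m; lra.
Qed.

Lemma expR_dset k (S : {set {set L}}) :
  \prod_(e in S) expR (- (k * edge_len d e)) = expR (- (k * dset d S)).
Proof. by rewrite /dset mulr_sumr -sumrN (big_morph _ (@expRD R) (expR0 R)). Qed.

Lemma sum_edge_subsets m mV (c : R) (T : {set {set L}}) :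
  \sum_(F : {set {set L}} | F \subset T)
     (c * cg d mV ^- #|F| * cg d m ^- #|T :\: F| * expR (- (mV * dset d F) - m * dset d (T :\: F)))
  = c * \prod_(e in T) edge_weight m mV e.
Proof.
rewrite prodD_sum_subsets mulr_sumr; apply: eq_bigr => F _.
rewrite !big_split /= !prodr_const !exprVn !expR_dset expRD.
by move: (_ ^-1) (_ ^-1) (expR _) (expR _) => *; ring.
Qed.

Lemma cluster_sum_le_cg (W : {set L} -> R) (a : R) (q : nat)
    (G : {set L} -> {set {set L}} -> R) mt x :
  (forall X T, 0 <= G X T) ->
  (forall r X T, r \in X -> is_tree X T -> G X T <= rooted_weight W a q r X T) ->
  (forall r, rooted_sum W a q #|L| r <= 1) ->
  \sum_(X : {set L} | X != set0) \sum_(T : {set {set L}} | `[< is_tree X T >])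
     G X T * expR (- (mt * dist_to d x X)) <= cg d mt.
Proof.
move=> G_ge0 G_le sum_le1.
apply: le_trans (_ : \sum_(X : {set L} | X != set0) \sum_(T | `[< is_tree X T >])
    \sum_(r in X) G X T * expR (- (mt * d x r)) <= _).
  apply: ler_sum => X X0; apply: ler_sum => T _; rewrite -mulr_sumr.
  by rewrite ler_wpM2l ?expR_dist_to_le.
under eq_bigr => X _ do rewrite exchange_big /=.
rewrite (exchange_big_dep predT) //=; apply: le_trans (sum_expR_le_cg mt x).
apply: ler_sum => r _; under eq_bigr => X _ do rewrite -mulr_suml.
rewrite -mulr_suml ler_piMl ?expR_ge0 //; apply: le_trans (sum_le1 r).
rewrite /rooted_sum pair_big_dep /=.
apply: le_trans (_ : \sum_(G | _) rooted_weight W a q r G.1 G.2 <= _).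
  by apply: ler_sum => -[X T] /andP[/andP[_ rX] /asboolP treeT]; apply: G_le.
apply: (ler_sum_inj (h := id) (F := fun G => rooted_weight W a q r G.1 G.2)) => // -[X T].
  by move=> /andP[/andP[_ rX] treeT]; rewrite /bounded_rooted_tree /= rX treeT max_card.
by move=> /and3P[rX _ /asboolP treeT]; apply: le_trans (G_ge0 X T) (G_le r X T rX treeT).
Qed.

Lemma cluster_sum_le m mV mt x :
  \sum_(X : {set L} | X != set0) \sum_(T : {set {set L}} | `[< is_tree X T >])
     \sum_(F : {set {set L}} | F \subset T)
       (12%:R ^- #|X| * cg d mV ^- #|F| * cg d m ^- #|T :\: F|
        * expR (- (mV * dset d F) - m * dset d (T :\: F))
        * expR (- (mt * dist_to d x X)))
  <= cg d mt.
Proof.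
under eq_bigr => X _ do under eq_bigr => T _ do rewrite -mulr_suml sum_edge_subsets.
apply: (cluster_sum_le_cg (W := edge_weight m mV) (a := 12%:R^-1) (q := 1)) => [X T | r X T _ _ | r].
- by rewrite mulr_ge0 ?invr_ge0 ?exprn_ge0 // prodr_ge0 // => e _; apply: edge_weight_ge0.
- rewrite /rooted_weight exprVn ler_peMr ?ler1n ?rooted_factor_gt0 //.
  by rewrite mulr_ge0 ?invr_ge0 ?exprn_ge0 // prodr_ge0 // => e _; apply: edge_weight_ge0.
- apply: (le_trans (y := 4%:R^-1)); last lra.
  apply: (rooted_sum_le _ (edge_weight_ge0 m mV) (B := 1%:R * 2)) => [|r'|]; [lra | | lra].
  by rewrite -mulr_sumr ler_wpM2l ?sum_edge_weight_le.
Qed.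

Lemma cluster_sum_fact_le m mV mt x :
  \sum_(X : {set L} | X != set0) \sum_(T : {set {set L}} | `[< is_tree X T >])
     \sum_(F : {set {set L}} | F \subset T)
       (32%:R ^- #|X| * cg d mV ^- #|F| * cg d m ^- #|T :\: F|
        * expR (- (mV * dset d F) - m * dset d (T :\: F))
        * expR (- (mt * dist_to d x X))
        * \prod_(y in X) ((deg T y)`!)%:R)
  <= cg d mt.
Proof.
under eq_bigr => X _ do under eq_bigr => T _ do rewrite -!mulr_suml sum_edge_subsets mulrAC.
apply: (cluster_sum_le_cg (W := edge_weight m mV) (a := 32%:R^-1) (q := 2)) => [X T | r X T _ _ | r].
- rewrite !mulr_ge0 ?invr_ge0 ?exprn_ge0 ?prodr_ge0 // => e _; exact: edge_weight_ge0.
- rewrite /rooted_weight exprVn -natr_prod; apply: ler_wpM2l.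
    by rewrite mulr_ge0 ?invr_ge0 ?exprn_ge0 // prodr_ge0 // => e _; apply: edge_weight_ge0.
  by rewrite ler_nat; apply: leq_prod => y _; apply: leq_fact_exp2.
- apply: (le_trans (y := 8%:R^-1)); last lra.
  apply: (rooted_sum_le _ (edge_weight_ge0 m mV) (B := 2%:R * 2)) => [|r'|]; [lra | | lra].
  by rewrite -mulr_sumr ler_wpM2l ?sum_edge_weight_le.
Qed.

End ClusterSums.

Theorem lemma5p6 (R : realType) (L : finType) (d : L -> L -> R)
  (m mV mt : R) :
  is_metric d -> 0 < m -> 0 < mV -> 0 < mt ->
  \big[Num.max/0]_(x : L)
     (\sum_(X : {set L} | X != finset.set0)
        \sum_(T : {set {set L}} | `[< is_tree X T >])
          \sum_(F : {set {set L}} | F \subset T)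
            (12%:R ^- #|X| * cg d mV ^- #|F| * cg d m ^- #|T :\: F|
             * expR (- (mV * dset d F) - m * dset d (T :\: F))
             * expR (- (mt * dist_to d x X))))
   <= cg d mt
  /\
  \big[Num.max/0]_(x : L)
     (\sum_(X : {set L} | X != finset.set0)
        \sum_(T : {set {set L}} | `[< is_tree X T >])
          \sum_(F : {set {set L}} | F \subset T)
            (32%:R ^- #|X| * cg d mV ^- #|F| * cg d m ^- #|T :\: F|
             * expR (- (mV * dset d F) - m * dset d (T :\: F))
             * expR (- (mt * dist_to d x X))
             * \prod_(y in X) ((deg T y)`!)%:R))
   <= cg d mt.
Proof.
(* The masses need not be positive: [cg d k >= 1] holds for every [k]. *)
move=> d_metric _ _ _.
by split; apply: bigmax_le (cg_ge0 d mt) _ => x _; [apply: cluster_sum_le | apply: cluster_sum_fact_le].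
Qed.
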